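(* Let $K$ be an algebraically closed field of characteristic zero, $\mathcal{K} = K(t)$, $d \ge 2$, $f_d(z) = z^d+t$, and $\alpha \in \mathcal{K}$. Then $\widehat{h}_{f_d}(\alpha) = h(\alpha)$ if $v_\infty(\alpha) < 0$, and $\widehat{h}_{f_d}(\alpha) = h(\alpha) + 1/d$ if $v_\infty(\alpha) \ge 0$. Thus, for all $n \ge 1$, $h(f_d^n(\alpha)) = d^n \widehat{h}_{f_d}(\alpha)$.
   Context: Valuations: $v_\infty(g) = \deg(\text{denominator}) - \deg(\text{numerator})$ for $g \in K(t)$. The height $h(\alpha)$ of $\alpha \in \mathcal{K}$ is its degree as a rational function in $t$, i.e. $-\sum_\mathfrak{p}\min\{v_\mathfrak{p}(\alpha),0\}$ over places of $\mathcal{K}$ trivial on $K$. The canonical height is $\widehat{h}_{f_d}(\alpha) := \lim_{n\to\infty} d^{-n} h(f_d^n(\alpha))$. *)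

From mathcomp Require Import all_boot all_order all_algebra fraction.
From mathcomp Require Import all_classical all_reals all_analysis.
Set Implicit Arguments. Unset Strict Implicit. Unset Printing Implicit Defensive.
Import Order.TTheory GRing.Theory Num.Theory.
Import numFieldNormedType.Exports.
Local Open Scope classical_set_scope.
Local Open Scope ring_scope.

(* The function field  K(t) = {fraction {poly K}}, t = 'X%:F. *)
Notation funfield K := {fraction {poly K}}.

(* numerator and denominator of the canonical (not necessarily reduced)
   representative of alpha; the denominator is nonzero *)
Definition fnum (K : fieldType) (a : funfield K) : {poly K} := (val (repr a)).1.
Definition fden (K : fieldType) (a : funfield K) : {poly K} := (val (repr a)).2.

Definition pdeg (K : fieldType) (p : {poly K}) : nat := (size p).-1.

Definition height (K : fieldType) (a : funfield K) : nat :=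
  let g := gcdp (fnum a) (fden a) in
  maxn (pdeg (fnum a %/ g)) (pdeg (fden a %/ g)).

(* v_infty(alpha) = deg(denominator) - deg(numerator); None encodes +oo (alpha = 0) *)
Definition vinf (K : fieldType) (a : funfield K) : option int :=
  if a == 0 then None
  else Some ((pdeg (fden a))%:Z - (pdeg (fnum a))%:Z).

Definition vinf_neg (K : fieldType) (a : funfield K) : bool :=
  if vinf a is Some v then v < 0 else false.

Definition fd (K : fieldType) (d : nat) (z : funfield K) : funfield K :=
  z ^+ d + tofrac 'X.

Definition hseq (R : realType) (K : fieldType) (d : nat) (a : funfield K) : R^nat :=
  fun n => (height (iter n (fd d) a))%:R / (d%:R ^+ n).

Definition canheight (R : realType) (K : fieldType) (d : nat) (a : funfield K) : R :=
  limn (hseq R d a).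

From mathcomp Require Import all_boot all_order all_algebra fraction.
From mathcomp Require Import all_classical all_reals all_analysis.
From mathcomp Require Import generic_quotient zify ring.
Import Order.TTheory GRing.Theory Num.Theory.
Import numFieldNormedType.Exports.
Set Implicit Arguments. Unset Strict Implicit.
Local Open Scope classical_set_scope.
Local Open Scope ring_scope.

(* Write alpha = p/q in lowest terms. Then f_d(p/q) = (p^d + t q^d)/q^d is again
   in lowest terms, and the two summands of the numerator never cancel at top
   degree, because deg p^d = d deg p and deg t q^d = d deg q + 1 differ mod d.
   Hence f_d(alpha) always has a pole at infinity, of height
   max(d deg p, d deg q + 1), and from then on each application of f_d
   multiplies the height by exactly d. So d^-n h(f_d^n(alpha)) is constant for n >= 1. Neither the
   algebraic closedness nor the characteristic of K plays a role. *)

Section FunctionField.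
Variable K : fieldType.
Implicit Types (a : funfield K) (p q : {poly K}).

Lemma tofrac_ratio (x : {ratio {poly K}}) :
  \pi_(funfield K)%qT x = tofrac x.1 / tofrac x.2.
Proof.
unlock tofrac.
have -> : (\pi_(funfield K) (Ratio x.1 1) / \pi_(funfield K) (Ratio x.2 1))%qT =
  FracField.mul (\pi_(funfield K) (Ratio x.1 1))%qT
                (FracField.inv (\pi_(funfield K) (Ratio x.2 1)))%qT by [].
rewrite -FracField.pi_inv -FracField.pi_mul /FracField.mulf /FracField.invf.
congr (\pi_ _ _)%qT.
by rewrite !numden_Ratio ?oner_neq0 ?(denom_ratioP x) ?mulr1 ?mul1r ?Ratio_numden.
Qed.

Lemma fnum_fdenE a : a = tofrac (fnum a) / tofrac (fden a).
Proof. by rewrite /fnum /fden -tofrac_ratio reprK. Qed.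

Lemma fden_neq0 a : fden a != 0.
Proof. exact: denom_ratioP. Qed.

Lemma tofrac_div_eq p q p' q' : q != 0 -> q' != 0 ->
  (tofrac p / tofrac q == tofrac p' / tofrac q') = (p * q' == p' * q).
Proof. by move=> q0 q'0; rewrite eqr_div ?tofrac_eq0 // -!tofracM tofrac_eq. Qed.

Definition reduced_rep a p q := [/\ q != 0, coprimep p q & a = tofrac p / tofrac q].

Lemma reduced_rep_size a p q p' q' : reduced_rep a p q -> reduced_rep a p' q' ->
  size p = size p' /\ size q = size q'.
Proof.
case=> q0 cpq ->; case=> q'0 cpq' /eqP; rewrite tofrac_div_eq // => /eqP E.
have cqp : coprimep q p by rewrite coprimep_sym.
have cqp' : coprimep q' p' by rewrite coprimep_sym.
split; apply: eqp_size; apply/andP; split.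
- by rewrite -(Gauss_dvdpl _ cpq) -E dvdp_mulr.
- by rewrite -(Gauss_dvdpl _ cpq') E dvdp_mulr.
- by rewrite -(Gauss_dvdpl _ cqp) mulrC E dvdp_mull.
- by rewrite -(Gauss_dvdpl _ cqp') mulrC -E dvdp_mull.
Qed.

Lemma reduced_rep_gcd a : reduced_rep a
  (fnum a %/ gcdp (fnum a) (fden a)) (fden a %/ gcdp (fnum a) (fden a)).
Proof.
set g := gcdp _ _; have m0 := fden_neq0 a.
have g0 : g != 0 by rewrite gcdp_eq0 negb_and m0 orbT.
have En : fnum a = fnum a %/ g * g by rewrite divpK // dvdp_gcdl.
have Em : fden a = fden a %/ g * g by rewrite divpK // dvdp_gcdr.
split.
- by apply: contra m0 => /eqP mg; rewrite Em mg mul0r.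
- by apply: coprimep_div_gcd; rewrite m0 orbT.
rewrite {1}(fnum_fdenE a) {1}En {1}Em !tofracM invfM mulrACA divff ?mulr1 //.
by rewrite tofrac_eq0.
Qed.

Lemma height_reduced_rep a p q : reduced_rep a p q -> height a = maxn (pdeg p) (pdeg q).
Proof.
by move=> rep; have [Ep Eq] := reduced_rep_size (reduced_rep_gcd a) rep;
  rewrite /height /pdeg Ep Eq.
Qed.

Lemma pdegM p q : p != 0 -> q != 0 -> pdeg (p * q) = (pdeg p + pdeg q)%N.
Proof.
by move=> p0 q0; rewrite /pdeg size_mul // (polySpred p0) (polySpred q0) addnS.
Qed.

Lemma pdegX p n : pdeg (p ^+ n) = (pdeg p * n)%N.
Proof. exact: size_exp. Qed.

Lemma pdegDl p q : (pdeg q < pdeg p)%N -> pdeg (p + q) = pdeg p.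
Proof. by rewrite /pdeg => lt_qp; rewrite size_polyDl //; lia. Qed.

Lemma vinf_neg_frac p q : q != 0 -> vinf_neg (tofrac p / tofrac q) = (pdeg q < pdeg p)%N.
Proof.
move=> q0; set a := tofrac p / tofrac q; rewrite /vinf_neg /vinf.
have [a0 | a_neq0] := eqVneq a 0.
  suff -> : p = 0 by rewrite /pdeg size_poly0.
  by apply/eqP; move: a0; rewrite /a => /eqP; rewrite mulf_eq0 invr_eq0 !tofrac_eq0 (negbTE q0) orbF.
have p0 : p != 0 by apply: contra a_neq0 => /eqP p0; rewrite /a p0 tofrac0 mul0r.
have n0 : fnum a != 0.
  by apply: contra a_neq0 => /eqP n0; rewrite (fnum_fdenE a) n0 tofrac0 mul0r.
have /eqP E : fnum a * q == p * fden a.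
  by rewrite -tofrac_div_eq ?fden_neq0 // -fnum_fdenE.
move: (congr1 (@pdeg K) E); rewrite !pdegM ?fden_neq0 // => Edeg.
by rewrite subr_lt0 ltz_nat; apply/idP/idP => /ssrnat.ltP; lia.
Qed.

Variable d : nat.

Lemma fd_frac p q : q != 0 ->
  fd d (tofrac p / tofrac q) = tofrac (p ^+ d + 'X * q ^+ d) / tofrac (q ^+ d).
Proof.
move=> q0; rewrite /fd tofracD tofracM !tofracXn expr_div_n mulrDl mulfK //.
by rewrite expf_neq0 // tofrac_eq0.
Qed.

Lemma reduced_rep_fd a p q : reduced_rep a p q ->
  reduced_rep (fd d a) (p ^+ d + 'X * q ^+ d) (q ^+ d).
Proof.
case=> q0 cpq ->; split; last exact: fd_frac.
- by rewrite expf_neq0.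
- rewrite coprimep_sym addrC coprimep_addl_mul.
  by apply/coprimep_expl/coprimep_expr; rewrite coprimep_sym.
Qed.

Hypothesis d_gt1 : (1 < d)%N.

Lemma pdeg_fd_num p q : q != 0 ->
  pdeg (p ^+ d + 'X * q ^+ d) = maxn (pdeg p * d) (pdeg q * d).+1.
Proof.
move=> q0; have qd0 : q ^+ d != 0 by rewrite expf_neq0.
have degXq : pdeg ('X * q ^+ d) = (pdeg q * d).+1.
  by rewrite pdegM ?polyX_eq0 // pdegX /pdeg size_polyX.
have [le_pq | lt_qp] := leqP (pdeg p) (pdeg q).
  rewrite addrC pdegDl ?degXq ?pdegX; last by apply/ssrnat.ltP; nia.
  by apply/esym/maxn_idPr; apply/ssrnat.leP; nia.
rewrite pdegDl ?degXq ?pdegX; last by apply/ssrnat.ltP; nia.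
by apply/esym/maxn_idPl; apply/ssrnat.leP; nia.
Qed.

Lemma vinf_neg_fd a : vinf_neg (fd d a).
Proof.
have [q0 _ ->] := reduced_rep_gcd a.
by rewrite fd_frac // vinf_neg_frac ?expf_neq0 // pdeg_fd_num // pdegX leq_max ltnSn orbT.
Qed.

Lemma height_fd a :
  height (fd d a) = if vinf_neg a then (height a * d)%N else (height a * d).+1.
Proof.
have [p [q rep]] : exists p q, reduced_rep a p q by do 2!eexists; exact: reduced_rep_gcd.
rewrite (height_reduced_rep (reduced_rep_fd rep)) (height_reduced_rep rep).
case: rep => q0 _ ->; rewrite pdeg_fd_num // pdegX vinf_neg_frac //.
by case: ltnP => h; apply/eqP; rewrite eqn_leq; apply/andP; split; apply/ssrnat.leP; nia.
Qed.

Lemma height_iter_fd a n :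
  vinf_neg a -> height (iter n (fd d) a) = (height a * d ^ n)%N.
Proof.
move=> neg_a; elim: n => [|n IHn]; first by rewrite expn0 muln1.
have neg_iter : vinf_neg (iter n (fd d) a) by case: n {IHn} => // n; exact: vinf_neg_fd.
by rewrite iterS height_fd neg_iter IHn expnSr mulnA.
Qed.

End FunctionField.

Lemma canheight_of_scaled_heights (R : realType) (K : fieldType) (d : nat)
    (a : funfield K) (c : R) : (0 < d)%N ->
  (forall n, (1 <= n)%N -> (height (iter n (fd d) a))%:R = d%:R ^+ n * c) ->
  cvgn (hseq R d a) /\ canheight R d a = c.
Proof.
move=> d_gt0 scaled.
have hseq_c : hseq R d a @ \oo --> c.
  apply: cvg_near_cst; exists 1%N => // n /= n_ge1.
  by rewrite /hseq scaled // mulrC mulKf // expf_neq0 // pnatr_eq0 -lt0n.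
by split; [apply/cvg_ex; exists c | exact: cvg_lim].
Qed.

Theorem corollary2p2 (R : realType) (K : closedFieldType)
    (charK0 : [pchar K] =i pred0) (d : nat) (hd : (2 <= d)%N)
    (a : funfield K) :
  cvgn (hseq R d a) /\
  (vinf_neg a -> canheight R d a = (height a)%:R) /\
  (~~ vinf_neg a -> canheight R d a = (height a)%:R + d%:R^-1) /\
  (forall n : nat, (1 <= n)%N ->
     (height (iter n (fd d) a))%:R = d%:R ^+ n * canheight R d a).
Proof.
have d0 : (d%:R : R) != 0 by rewrite pnatr_eq0 -lt0n ltnW.
set c : R := if vinf_neg a then (height a)%:R else (height a)%:R + d%:R^-1.
have scaled n : (1 <= n)%N -> (height (iter n (fd d) a))%:R = d%:R ^+ n * c.
  case: n => // n _; rewrite iterSr height_iter_fd ?vinf_neg_fd // height_fd //.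
  rewrite /c natrM natrX exprSr; case: vinf_neg; rewrite ?natrM //; first by ring.
  by rewrite -addn1 natrD natrM; field.
have [cvg_hseq ->] := canheight_of_scaled_heights (ltnW hd) scaled.
by rewrite /c; do !split => //; case: vinf_neg.
Qed.
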